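(* Let $0\le\theta\le1$, let $K\subset\mathbb{C}^d$ be compact and $\mu$ a Borel probability measure with support in $K$ such that $(K,\mu)$ satisfies the Bernstein–Markov property for $\theta$-incomplete polynomials. Then for every $\epsilon>0$ there exists $C>0$ such that for all $N$ and all $z\in\mathbb{C}^d$, $$\frac{(\Phi_{K,\theta,N}(z))^2}{d(N,\theta)}\le K_{N,\theta}(z,z)\le Ce^{\epsilon N}(\Phi_{K,\theta,N}(z))^2\,d(N,\theta).$$
   Context: $\pi_{N,\theta}$ is the space of polynomials $\sum_{|\alpha|=\lceil N\theta\rceil}^Nc_\alpha z^\alpha$ on $\mathbb{C}^d$, of dimension $d(N,\theta)$. $(K,\mu)$ satisfies the Bernstein–Markov property for $\theta$-incomplete polynomials if for every $\epsilon>0$ there is $C>0$ with $\|P\|_K\le Ce^{\epsilon N}\|P\|_{L^2(\mu)}$ for all $P\in\pi_{N,\theta}$, all $N\ge0$. $\Phi_{K,\theta,N}(z)=\sup\{|f(z)|:f\in\pi_{N,\theta},\ \|f\|_K\le1\}$. If $\{P_j\}_{j=1}^{d(N,\theta)}$ is an orthonormal basis of $\pi_{N,\theta}$ for $\langle f,g\rangle=\int f\bar g\,d\mu$, then $K_{N,\theta}(z,w)=\sum_jP_j(z)\overline{P_j(w)}$. *)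

(* C^d is modelled by the real 2 x d
   matrices (row 0 = real parts, row 1 = imaginary parts) with their
   Euclidean (product) topology; complex numbers are R[i] (real_closed);
   polynomials on C^d are multinomials' {mpoly R[i][d]} (qualified names). *)
From HB Require Import structures.
From mathcomp Require Import all_boot all_order all_algebra.
From mathcomp Require Import all_classical all_reals all_analysis.
From mathcomp Require Import complex.
From mathcomp Require mpoly.
Import (canonicals, coercions) mpoly.
Set Implicit Arguments. Unset Strict Implicit. Unset Printing Implicit Defensive.
Import Order.TTheory GRing.Theory Num.Theory.
Import numFieldNormedType.Exports.
Local Open Scope classical_set_scope.
Local Open Scope ring_scope.

Section Defs.
Variables (R : realType) (d : nat).

Definition Cd := 'M[R]_(2, d).
Definition CdB := g_sigma_algebraType (@open Cd).

Definition coord (z : Cd) : 'I_d -> R[i] :=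
  fun j => (z ord0 j +i* z ord_max j)%C.

Definition cmod (c : R[i]) : R :=
  Num.sqrt (complex.Re c ^+ 2 + complex.Im c ^+ 2).

Local Notation cpoly := (mpoly.mpoly d R[i]).

Definition peval (P : cpoly) (z : Cd) : R[i] := mpoly.meval (coord z) P.

Definition in_pi (N : nat) (theta : R) (P : cpoly) : Prop :=
  forall m : mpoly.multinom d, mpoly.mcoeff m P != 0 ->
    (Num.ceil (N%:R * theta) <= (mpoly.mdeg m)%:Z) && (mpoly.mdeg m <= N)%N.

(* d(N,theta) = dim pi_{N,theta} = number of multi-indices alpha in N^d with
   ceil(N theta) <= |alpha| <= N (each alpha_i <= N) *)
Definition dNtheta (N : nat) (theta : R) : nat :=
  #|[set a : {ffun 'I_d -> 'I_N.+1} |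
     (Num.ceil (N%:R * theta) <= (\sum_i (a i : nat))%:Z) &&
     (\sum_i (a i : nat) <= N)%N]|.

Definition supnorm (K : set Cd) (f : Cd -> R[i]) : R :=
  sup [set cmod (f z) | z in K].

Definition cint (mu : probability CdB R) (h : Cd -> R[i]) : R[i] :=
  (Rintegral mu setT (fun z : CdB => complex.Re (h z))
   +i* Rintegral mu setT (fun z : CdB => complex.Im (h z)))%C.

Definition inner (mu : probability CdB R) (f g : Cd -> R[i]) : R[i] :=
  cint mu (fun z => f z * conjc (g z)).

Definition L2norm (mu : probability CdB R) (f : Cd -> R[i]) : R :=
  Num.sqrt (fine (\int[mu]_(z in setT) ((cmod (f (z : CdB))) ^+ 2)%:E)).

Definition BM_theta (K : set Cd) (mu : probability CdB R) (theta : R) : Prop :=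
  forall eps : R, 0 < eps -> exists C : R, 0 < C /\
    forall (N : nat) (P : cpoly), in_pi N theta P ->
      supnorm K (peval P) <= C * expR (eps * N%:R) * L2norm mu (peval P).

Definition Phi (K : set Cd) (theta : R) (N : nat) (z : Cd) : R :=
  sup [set cmod (peval P z) | P in
         [set P : cpoly | in_pi N theta P /\ supnorm K (peval P) <= 1]].

Definition is_onb (mu : probability CdB R) (N : nat) (theta : R) (n : nat)
    (B : 'I_n -> cpoly) : Prop :=
  [/\ forall j, in_pi N theta (B j),
      forall i j, inner mu (peval (B i)) (peval (B j)) = (i == j)%:R
    & forall P, in_pi N theta P ->
        exists c : 'I_n -> R[i], P = \sum_j c j *: B j].

Definition KNtheta (n : nat) (B : 'I_n -> cpoly) (z w : Cd) : R[i] :=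
  \sum_j peval (B j) z * conjc (peval (B j) w).

End Defs.
Notation cpoly R d := (mpoly.mpoly d R[i]).

(* Expanding an admissible P (|P| <= 1 on K) in the orthonormal basis,
   P = sum_j c_j P_j, the coefficients satisfy sum_j |c_j|^2 = ||P||_{L^2(mu)}^2
   <= 1 since mu is a probability measure carried by K; Cauchy-Schwarz then gives
   |P(z)|^2 <= K_N(z,z), whence Phi(z)^2 <= K_N(z,z).  Conversely each basis
   element satisfies |P_j(z)| <= Phi(z) ||P_j||_K <= Phi(z) C e^{eps N / 2}
   ||P_j||_{L^2(mu)} by the Bernstein-Markov property, and summing the d(N,theta)
   squares gives the upper bound. *)

From HB Require Import structures.
From mathcomp Require Import all_boot all_order all_algebra.
From mathcomp Require Import all_classical all_reals all_analysis.
From mathcomp Require Import complex.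
From mathcomp Require Import measurable_realfun.
From mathcomp Require Import ring lra.
From mathcomp Require mpoly.
Import (canonicals, coercions) mpoly.
Import Order.TTheory GRing.Theory Num.Theory.
Import numFieldNormedType.Exports.
Local Open Scope classical_set_scope.
Local Open Scope ring_scope.
Set Implicit Arguments. Unset Strict Implicit. Unset Printing Implicit Defensive.

Lemma sqr_sum_mul_le (F : realDomainType) (I : finType) (x y : I -> F) :
  (\sum_i x i * y i) ^+ 2 <= (\sum_i x i ^+ 2) * (\sum_i y i ^+ 2).
Proof.
have lagrange : \sum_i \sum_j (x i * y j - x j * y i) ^+ 2 =
    2 * ((\sum_i x i ^+ 2) * (\sum_i y i ^+ 2) - (\sum_i x i * y i) ^+ 2).
  have expand i j : (x i * y j - x j * y i) ^+ 2 =
      (x i ^+ 2 * y j ^+ 2 + y i ^+ 2 * x j ^+ 2) - 2 * ((x i * y i) * (x j * y j)).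
    by ring.
  under eq_bigr do under eq_bigr do rewrite expand.
  under eq_bigr do rewrite sumrB big_split /= -!mulr_sumr.
  rewrite sumrB big_split /= -!mulr_suml -mulr_sumr -mulr_suml expr2; ring.
have : 0 <= \sum_i \sum_j (x i * y j - x j * y i) ^+ 2.
  by apply: sumr_ge0 => i _; apply: sumr_ge0 => j _; exact: sqr_ge0.
by rewrite lagrange pmulr_rge0 // subr_ge0.
Qed.

Section ComplexModulus.
Variable R : realType.
Implicit Types (a b c : R[i]) (r : R).

Lemma cmod_ge0 c : 0 <= cmod c.
Proof. exact: sqrtr_ge0. Qed.

Lemma cmodE c : cmod c = Normc.normc c.
Proof. by case: c. Qed.

Lemma cmodM a b : cmod (a * b) = cmod a * cmod b.
Proof. by rewrite !cmodE Normc.normcM. Qed.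

Lemma cmodD a b : cmod (a + b) <= cmod a + cmod b.
Proof. by rewrite !cmodE; exact: le_normcD. Qed.

Lemma cmod0 : cmod (0 : R[i]) = 0.
Proof. by rewrite /cmod /= expr0n /= addr0 sqrtr0. Qed.

Lemma cmod_real r : cmod r%:C%C = `|r|.
Proof. by rewrite /cmod /= expr0n /= addr0 sqrtr_sqr. Qed.

Lemma cmod_sum (I : Type) (s : seq I) (F : I -> R[i]) :
  cmod (\sum_(i <- s) F i) <= \sum_(i <- s) cmod (F i).
Proof.
elim: s => [|a s IH]; first by rewrite !big_nil cmod0.
by rewrite !big_cons; apply: le_trans (cmodD _ _) _; exact: lerD.
Qed.

Lemma sqr_cmod c : cmod c ^+ 2 = complex.Re (c * conjc c).
Proof.
case: c => a b /=; rewrite sqr_sqrtr ?addr_ge0 ?sqr_ge0 //.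
by rewrite mulrN opprK !expr2.
Qed.

End ComplexModulus.

Section ComplexContinuity.
Variables (T : topologicalType) (R : realType).
Implicit Types (f g : T -> R[i]).

(* R[i] carries no topology here, so continuity of complex-valued maps is
   taken componentwise. *)
Definition ccontinuous f :=
  continuous (fun x => complex.Re (f x)) /\ continuous (fun x => complex.Im (f x)).

Lemma ccontinuous_cst (c : R[i]) : ccontinuous (fun=> c).
Proof. by split; exact: cst_continuous. Qed.

Lemma ccontinuousD f g : ccontinuous f -> ccontinuous g ->
  ccontinuous (fun x => f x + g x).
Proof.
move=> [f1 f2] [g1 g2]; split=> x; under eq_fun do rewrite raddfD.
- exact: continuousD (f1 x) (g1 x).
- exact: continuousD (f2 x) (g2 x).
Qed.

Lemma ccontinuousM f g : ccontinuous f -> ccontinuous g ->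
  ccontinuous (fun x => f x * g x).
Proof.
move=> [f1 f2] [g1 g2]; split=> x.
- have -> : (fun x => complex.Re (f x * g x)) =
      fun x => complex.Re (f x) * complex.Re (g x) - complex.Im (f x) * complex.Im (g x).
    by apply: funext => y; case: (f y); case: (g y).
  exact: continuousB (continuousM (f1 x) (g1 x)) (continuousM (f2 x) (g2 x)).
- have -> : (fun x => complex.Im (f x * g x)) =
      fun x => complex.Re (f x) * complex.Im (g x) + complex.Im (f x) * complex.Re (g x).
    by apply: funext => y; case: (f y) => a b; case: (g y) => c e /=; rewrite [b * c]mulrC.
  exact: continuousD (continuousM (f1 x) (g2 x)) (continuousM (f2 x) (g1 x)).
Qed.

Lemma ccontinuousJ f : ccontinuous f -> ccontinuous (fun x => conjc (f x)).
Proof.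
move=> [f1 f2]; split=> x.
- have -> : (fun x => complex.Re (conjc (f x))) = fun x => complex.Re (f x).
    by apply: funext => y; case: (f y).
  exact: f1.
- have -> : (fun x => complex.Im (conjc (f x))) = fun x => - complex.Im (f x).
    by apply: funext => y; case: (f y).
  exact: continuousN (f2 x).
Qed.

Lemma ccontinuous_sum (I : Type) (s : seq I) (F : I -> T -> R[i]) :
  (forall i, ccontinuous (F i)) -> ccontinuous (fun x => \sum_(i <- s) F i x).
Proof.
move=> cF; elim: s => [|a s IH].
  by under eq_fun do rewrite big_nil; exact: ccontinuous_cst.
by under eq_fun do rewrite big_cons; exact: ccontinuousD.
Qed.

Lemma ccontinuous_prod (I : Type) (s : seq I) (F : I -> T -> R[i]) :
  (forall i, ccontinuous (F i)) -> ccontinuous (fun x => \prod_(i <- s) F i x).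
Proof.
move=> cF; elim: s => [|a s IH].
  by under eq_fun do rewrite big_nil; exact: ccontinuous_cst.
by under eq_fun do rewrite big_cons; exact: ccontinuousM.
Qed.

Lemma ccontinuousX f n : ccontinuous f -> ccontinuous (fun x => f x ^+ n).
Proof.
move=> cf; elim: n => [|n IH]; first exact: ccontinuous_cst.
by under eq_fun do rewrite exprS; exact: ccontinuousM.
Qed.

End ComplexContinuity.

Lemma ccontinuous_peval (R : realType) (d : nat) (P : cpoly R d) :
  ccontinuous (peval P).
Proof.
apply: ccontinuous_sum => m; apply: ccontinuousM; first exact: ccontinuous_cst.
apply: ccontinuous_prod => j; apply: ccontinuousX.
by split; exact: coord_continuous.
Qed.

Lemma bounded_continuous_on_compact (T : topologicalType) (R : realType)
    (K : set T) (f : T -> R) :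
  compact K -> continuous f -> exists M, forall x, K x -> `|f x| <= M.
Proof.
move=> cK cf.
have /compact_bounded : compact (f @` K).
  by apply: continuous_compact => //; exact: continuous_subspaceT.
rewrite /bounded_near => /pinfty_ex_gt0 [M _ fKM].
by exists M => x Kx; apply: fKM; exists x.
Qed.

Section BorelCd.
Variables (R : realType) (d : nat).

Lemma continuous_measurable_fun (f : Cd R d -> R) : continuous f ->
  measurable_fun setT (f : CdB R d -> R).
Proof.
move=> /continuousP cf.
apply: (measurability _ (RGenOpens.measurableE R)).
move=> _ [_ [a [b ->] <-]]; rewrite setTI; apply: sub_sigma_algebra.
exact/cf/interval_open.
Qed.

Lemma compact_measurable (K : set (Cd R d)) : compact K ->
  measurable (K : set (CdB R d)).
Proof.
move=> cK; have cl : closed K by apply: compact_closed cK; exact: norm_hausdorff.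
rewrite -[K]setCK; apply: measurableC; apply: sub_sigma_algebra; exact: closed_openC.
Qed.

End BorelCd.

Section CompactlySupportedProbability.
Variables (R : realType) (d : nat) (K : set (Cd R d)) (mu : probability (CdB R d) R).
Hypotheses (cK : compact K) (muCK : mu (~` K) = 0%E).

Lemma support_nonempty : K !=set0.
Proof.
apply/set0P/negP => /eqP K0.
have := probability_setT mu; rewrite -setC0 -K0 muCK => /esym/eqP.
by rewrite eqe oner_eq0.
Qed.

Lemma continuous_integrable (f : CdB R d -> R) : continuous (f : Cd R d -> R) ->
  mu.-integrable setT (EFin \o f).
Proof.
move=> cf.
have mK := compact_measurable cK.
have mf := continuous_measurable_fun cf.
have mEf : measurable_fun setT (EFin \o f) by exact/measurable_EFinP.
apply/(negligible_integrable (measurableC mK) measurableT mEf muCK).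
rewrite setTD setCK; apply: measurable_bounded_integrable => //.
- by rewrite (le_lt_trans (probability_le1 _ mK)) // ltry.
- exact: measurable_funS mf.
have [M fM] := bounded_continuous_on_compact cK cf.
exists M; split; first exact: num_real.
by move=> y My x Kx /=; rewrite (le_trans (fM x Kx)) // ltW.
Qed.

Lemma Rintegral_le_bound (g : CdB R d -> R) (s : R) :
  continuous (g : Cd R d -> R) -> (forall x, 0 <= g x) ->
  (forall x, K x -> g x <= s) -> 0 <= s -> Rintegral mu setT g <= s.
Proof.
move=> cg g0 gs s0.
have mg := (measurable_EFinP _ _).2 (continuous_measurable_fun cg).
have : (\int[mu]_(x in setT) (g x)%:E <= \int[mu]_(x in setT) s%:E)%E.
  apply: ae_ge0_le_integral => //.
  - by move=> x _; rewrite lee_fin.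
  - exists (~` K); split => //; first by apply: measurableC; exact: compact_measurable.
    by move=> x /= gxs Kx; apply: gxs => _; rewrite lee_fin; exact: gs.
rewrite integral_cst //= probability_setT mule1 /Rintegral.
have : (0 <= \int[mu]_(x in setT) (g x)%:E)%E.
  by apply: integral_ge0 => x _; rewrite lee_fin.
by case: (\int[mu]_(x in setT) (g x)%:E)%E.
Qed.

Lemma cintD (f g : Cd R d -> R[i]) : ccontinuous f -> ccontinuous g ->
  cint mu (fun x => f x + g x) = cint mu f + cint mu g.
Proof.
move=> [f1 f2] [g1 g2]; rewrite /cint.
under eq_Rintegral do rewrite raddfD.
under [X in (_ +i* X)%C]eq_Rintegral do rewrite raddfD.
by rewrite !RintegralD //; exact: continuous_integrable.
Qed.

Lemma cintZ (c : R[i]) (f : Cd R d -> R[i]) : ccontinuous f ->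
  cint mu (fun x => c * f x) = c * cint mu f.
Proof.
move=> [f1 f2].
have iZ k (g : Cd R d -> R) : continuous g ->
    mu.-integrable setT (EFin \o (fun x => k * g x)).
  move=> cg; apply: continuous_integrable => x.
  by have := continuousM (@cst_continuous _ _ k x) (cg x).
case: c => a b; rewrite /cint.
have -> : (fun x => complex.Re ((a +i* b)%C * f x)) =
    fun x => a * complex.Re (f x) - b * complex.Im (f x).
  by apply: funext => x; case: (f x).
have -> : (fun x => complex.Im ((a +i* b)%C * f x)) =
    fun x => a * complex.Im (f x) + b * complex.Re (f x).
  by apply: funext => x; case: (f x) => u v /=; rewrite [b * u]mulrC.
by rewrite RintegralB ?RintegralD ?RintegralZl ?iZ //; exact: continuous_integrable.
Qed.

Lemma cint_sum (I : Type) (s : seq I) (F : I -> Cd R d -> R[i]) :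
  (forall i, ccontinuous (F i)) ->
  cint mu (fun x => \sum_(i <- s) F i x) = \sum_(i <- s) cint mu (F i).
Proof.
move=> cF; elim: s => [|a s IH].
  by under eq_fun do rewrite big_nil; rewrite big_nil /cint /= !Rintegral_cst // !mul0r.
under eq_fun do rewrite big_cons.
by rewrite cintD ?big_cons ?IH //; exact: ccontinuous_sum.
Qed.

Lemma Rintegral_sqr_cmod (f : Cd R d -> R[i]) :
  Rintegral mu setT (fun x => cmod (f x) ^+ 2) = complex.Re (inner mu f f).
Proof. by under eq_Rintegral do rewrite sqr_cmod. Qed.

End CompactlySupportedProbability.

Section Polynomials.
Variables (R : realType) (d : nat).
Implicit Types (P : cpoly R d) (z : Cd R d).

Lemma peval0 z : peval (0 : cpoly R d) z = 0.
Proof. exact: mpoly.meval0. Qed.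

Lemma pevalZ (c : R[i]) P z : peval (c *: P) z = c * peval P z.
Proof. exact: mpoly.mevalZ. Qed.

Lemma peval_lincomb n (c : 'I_n -> R[i]) (B : 'I_n -> cpoly R d) z :
  peval (\sum_j c j *: B j) z = \sum_j c j * peval (B j) z.
Proof.
rewrite /peval (big_morph _ (mpoly.mevalD _) (mpoly.meval0 _)).
by apply: eq_bigr => j _; rewrite mpoly.mevalZ.
Qed.

Lemma in_pi0 N theta : in_pi N theta (0 : cpoly R d).
Proof. by move=> m; rewrite mpoly.mcoeff0 eqxx. Qed.

Lemma in_piZ N theta (c : R[i]) P : in_pi N theta P -> in_pi N theta (c *: P).
Proof.
move=> hP m; rewrite mpoly.mcoeffZ => hm; apply: hP.
by apply: contraNneq hm => ->; rewrite mulr0.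
Qed.

Lemma Re_KNtheta_diag n (B : 'I_n -> cpoly R d) z :
  complex.Re (KNtheta B z z) = \sum_j cmod (peval (B j) z) ^+ 2.
Proof. by rewrite /KNtheta raddf_sum; apply: eq_bigr => j _; rewrite sqr_cmod. Qed.

End Polynomials.

Section SupNorm.
Variables (R : realType) (d : nat) (K : set (Cd R d)).
Implicit Types (f : Cd R d -> R[i]).

Lemma supnorm_ub f x : compact K -> ccontinuous f -> K x -> cmod (f x) <= supnorm K f.
Proof.
move=> cK cf Kx; apply: ub_le_sup; last by exists x.
have [M fM] := bounded_continuous_on_compact cK (ccontinuousM cf (ccontinuousJ cf)).1.
exists (Num.sqrt M) => _ [y Ky <-].
rewrite -[cmod _]ger0_norm ?cmod_ge0 // -sqrtr_sqr sqr_cmod.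
by apply: ler_wsqrtr; exact: le_trans (ler_norm _) (fM y Ky).
Qed.

Lemma supnorm_le f s : K !=set0 -> (forall x, K x -> cmod (f x) <= s) ->
  supnorm K f <= s.
Proof.
move=> [x Kx] fs; apply: ge_sup; first by exists (cmod (f x)), x.
by move=> _ [y Ky <-]; exact: fs.
Qed.

End SupNorm.

Section OrthonormalBasis.
Variables (R : realType) (d : nat) (K : set (Cd R d)) (mu : probability (CdB R d) R).
Hypotheses (cK : compact K) (muCK : mu (~` K) = 0%E).
Variables (N : nat) (theta : R) (n : nat) (B : 'I_n -> cpoly R d).
Hypothesis onb : is_onb mu N theta B.

Lemma L2norm_onb j : L2norm mu (peval (B j)) = 1.
Proof.
have [_ orth _] := onb.
rewrite /L2norm -[fine _]/(Rintegral _ _ _) Rintegral_sqr_cmod.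
by rewrite orth eqxx sqrtr1.
Qed.

Lemma parseval (c : 'I_n -> R[i]) :
  complex.Re (inner mu (peval (\sum_j c j *: B j)) (peval (\sum_j c j *: B j)))
  = \sum_j cmod (c j) ^+ 2.
Proof.
have [_ orth _] := onb.
pose w i j x := peval (B i) x * conjc (peval (B j) x).
have cw i j : ccontinuous (w i j).
  exact: ccontinuousM (ccontinuous_peval _) (ccontinuousJ (ccontinuous_peval _)).
have -> : inner mu (peval (\sum_j c j *: B j)) (peval (\sum_j c j *: B j)) =
    cint mu (fun x => \sum_i \sum_j c i * conjc (c j) * w i j x).
  rewrite /inner; congr cint; apply: funext => x.
  rewrite peval_lincomb rmorph_sum mulr_suml; apply: eq_bigr => i _.
  rewrite mulr_sumr; apply: eq_bigr => j _; rewrite rmorphM /w; ring.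
rewrite (cint_sum cK muCK); last first.
  by move=> i; apply: ccontinuous_sum => j; exact: ccontinuousM (ccontinuous_cst _ _) (cw i j).
rewrite raddf_sum; apply: eq_bigr => i _.
rewrite (cint_sum cK muCK); last by move=> j; exact: ccontinuousM (ccontinuous_cst _ _) (cw i j).
under eq_bigr do rewrite (cintZ cK muCK) // [cint _ _]orth.
rewrite (bigD1 i) //= big1 ?addr0 ?eqxx ?mulr1 ?sqr_cmod //.
by move=> j /negbTE; rewrite eq_sym => ->; rewrite mulr0.
Qed.

End OrthonormalBasis.

Section PhiKernel.
Variables (R : realType) (d : nat) (K : set (Cd R d)) (mu : probability (CdB R d) R).
Hypotheses (cK : compact K) (muCK : mu (~` K) = 0%E).
Variables (N : nat) (theta : R) (n : nat) (B : 'I_n -> cpoly R d).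
Hypothesis onb : is_onb mu N theta B.
Variable z : Cd R d.

Lemma sqr_cmod_peval_le_KNtheta P : in_pi N theta P -> supnorm K (peval P) <= 1 ->
  cmod (peval P z) ^+ 2 <= complex.Re (KNtheta B z z).
Proof.
move=> hP P1; have [_ _ span] := onb; have [c Pc] := span P hP.
have cP := ccontinuous_peval P.
have c_le1 : \sum_j cmod (c j) ^+ 2 <= 1.
  rewrite -(parseval cK muCK onb) -Pc -Rintegral_sqr_cmod.
  apply: (Rintegral_le_bound cK muCK) => [|x|x Kx|//]; last 2 first.
  - exact: sqr_ge0.
  - apply: exprn_ile1; first exact: cmod_ge0.
    exact: le_trans (supnorm_ub cK cP Kx) P1.
  under eq_fun do rewrite sqr_cmod; exact: (ccontinuousM cP (ccontinuousJ cP)).1.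
rewrite Re_KNtheta_diag Pc peval_lincomb.
apply: (@le_trans _ _ ((\sum_j cmod (c j) * cmod (peval (B j) z)) ^+ 2)).
  apply: lerXn2r; rewrite ?nnegrE ?cmod_ge0 //.
    by apply: sumr_ge0 => j _; rewrite mulr_ge0 ?cmod_ge0.
  by apply: le_trans (cmod_sum _ _) _; apply: ler_sum => j _; rewrite cmodM.
apply: le_trans (sqr_sum_mul_le _ _) _; apply: ler_piMl c_le1.
by apply: sumr_ge0 => j _; exact: sqr_ge0.
Qed.

Let admissible := [set P : cpoly R d | in_pi N theta P /\ supnorm K (peval P) <= 1].

Lemma Phi_ubound :
  ubound [set cmod (peval P z) | P in admissible] (Num.sqrt (complex.Re (KNtheta B z z))).
Proof.
move=> _ [P [hP P1] <-].
rewrite -[cmod _]ger0_norm ?cmod_ge0 // -sqrtr_sqr.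
by apply: ler_wsqrtr; exact: sqr_cmod_peval_le_KNtheta.
Qed.

Lemma le_Phi P : in_pi N theta P -> supnorm K (peval P) <= 1 ->
  cmod (peval P z) <= Phi K theta N z.
Proof.
move=> hP P1; apply: ub_le_sup; last by exists P.
by exists (Num.sqrt (complex.Re (KNtheta B z z))); exact: Phi_ubound.
Qed.

Lemma admissible0 : admissible 0.
Proof.
split; first exact: in_pi0.
by apply: (supnorm_le (support_nonempty muCK)) => x _; rewrite peval0 cmod0.
Qed.

Lemma Phi_ge0 : 0 <= Phi K theta N z.
Proof.
have [hP P1] := admissible0.
by rewrite -(cmod0 R) -(peval0 z); exact: le_Phi.
Qed.

Lemma sqr_Phi_le_KNtheta : Phi K theta N z ^+ 2 <= complex.Re (KNtheta B z z).
Proof.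
have K0 : 0 <= complex.Re (KNtheta B z z).
  by rewrite Re_KNtheta_diag; apply: sumr_ge0 => j _; exact: sqr_ge0.
rewrite -(sqr_sqrtr K0); apply: lerXn2r; rewrite ?nnegrE ?Phi_ge0 ?sqrtr_ge0 //.
apply: ge_sup; last exact: Phi_ubound.
by exists 0, 0; [exact: admissible0 | rewrite peval0 cmod0].
Qed.

Lemma cmod_peval_le_Phi_supnorm P : in_pi N theta P ->
  cmod (peval P z) <= Phi K theta N z * supnorm K (peval P).
Proof.
move=> hP; set s := supnorm K (peval P); set phi := Phi K theta N z.
have phi0 : 0 <= phi := Phi_ge0.
have s0 : 0 <= s.
  have [x Kx] := support_nonempty muCK.
  exact: le_trans (cmod_ge0 _) (supnorm_ub cK (ccontinuous_peval P) Kx).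
apply/ler_addgt0Pr => e e0.
(* rescale by some r > s rather than by s, which may vanish *)
pose r := s + e / (phi + 1).
have r0 : 0 < r by rewrite ltr_wpDl // divr_gt0 // ltr_wpDl.
have cmod_scale x : cmod (peval ((r^-1)%:C%C *: P) x) = cmod (peval P x) / r.
  by rewrite pevalZ cmodM cmod_real ger0_norm ?invr_ge0 ?(ltW r0) // mulrC.
have Pr_admissible : supnorm K (peval ((r^-1)%:C%C *: P)) <= 1.
  apply: (supnorm_le (support_nonempty muCK)) => x Kx.
  rewrite cmod_scale ler_pdivrMr // mul1r.
  apply: le_trans (supnorm_ub cK (ccontinuous_peval P) Kx) _.
  by rewrite lerDl divr_ge0 ?(ltW e0) // addr_ge0.
have := le_Phi (in_piZ (c := (r^-1)%:C%C) hP) Pr_admissible.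
rewrite cmod_scale ler_pdivrMr // => /le_trans; apply.
rewrite /r mulrDr lerD2l mulrA ler_pdivrMr ?ltr_wpDl //.
by rewrite -/phi mulrDr mulr1 mulrC lerDl ltW.
Qed.

Lemma Re_KNtheta_le M : (forall j, supnorm K (peval (B j)) <= M) ->
  complex.Re (KNtheta B z z) <= n%:R * (Phi K theta N z * M) ^+ 2.
Proof.
move=> BM; have [inB _ _] := onb.
rewrite Re_KNtheta_diag mulr_natl -[n in _ *+ n]card_ord -sumr_const.
apply: ler_sum => j _.
have Bj : cmod (peval (B j) z) <= Phi K theta N z * M.
  exact: le_trans (cmod_peval_le_Phi_supnorm (inB j)) (ler_wpM2l Phi_ge0 (BM j)).
have PhiM0 : 0 <= Phi K theta N z * M := le_trans (cmod_ge0 _) Bj.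
by apply: lerXn2r Bj; rewrite ?nnegrE ?cmod_ge0.
Qed.

End PhiKernel.

Lemma ler_divr_nat (F : numFieldType) (x : F) (k : nat) : 0 <= x -> x / k%:R <= x.
Proof.
case: k => [|k] x0; first by rewrite invr0 mulr0.
by rewrite ler_pdivrMr // ler_peMr // ler1n.
Qed.

Unset Implicit Arguments.

Theorem mainTheorem13 (R : realType) (d : nat) (theta : R)
    (K : set (Cd R d)) (mu : probability (CdB R d) R) :
  0 <= theta <= 1 ->
  compact K ->
  mu (~` K) = 0%E ->
  BM_theta K mu theta ->
  forall eps : R, 0 < eps -> exists C : R, 0 < C /\
    forall (N : nat) (B : 'I_(dNtheta d N theta) -> cpoly R d),
      is_onb mu N theta B ->
      forall z : Cd R d,
        (Phi K theta N z) ^+ 2 / (dNtheta d N theta)%:R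
          <= complex.Re (KNtheta B z z)
        /\ complex.Re (KNtheta B z z)
          <= C * expR (eps * N%:R) * (Phi K theta N z) ^+ 2
               * (dNtheta d N theta)%:R.
Proof.
move=> _ cK muCK BM eps eps0.
have [C [C0 BMC]] := BM (eps / 2) (divr_gt0 eps0 (ltr0Sn _ 1)).
exists (C ^+ 2); split; first exact: exprn_gt0.
move=> N B onb z; have [inB _ _] := onb.
have KPhi := sqr_Phi_le_KNtheta cK muCK onb z.
split; first exact: le_trans (ler_divr_nat _ (sqr_ge0 _)) KPhi.
pose E := expR (eps / 2 * N%:R).
have supB j : supnorm K (peval (B j)) <= C * E.
  by have := BMC N (B j) (inB j); rewrite (L2norm_onb onb) mulr1.
apply: le_trans (Re_KNtheta_le cK muCK onb z supB) _.
have -> : expR (eps * N%:R) = E ^+ 2 by rewrite -expRM_natr; congr expR; field.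
lra.
Qed.
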